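(* Let $(\beta_k)_{k\ge1}$ be non-negative reals with $\sum_{k\ge1}k\beta_k<\infty$, let $\beta(t)=\sum_{k\ge1}\beta_k t^k$, let $t^*=\inf\{t\ge0:\beta'(t)+\log(1-t)<0\}$ (so $t^*\in[0,1)$), and let $\gamma(t)=(1-t)\beta''(t)$. Then $\gamma(t^* )\le 1$. *)

From Stdlib Require Import Reals.
From Coquelicot Require Import Coquelicot.
Open Scope R_scope.

(* The coefficient sequence is b : nat -> R with beta_k = b k for k >= 1
   (b 0 is ignored).  beta(t) = sum_{k>=1} beta_k t^k. *)
Definition beta_fun (b : nat -> R) (t : R) : R :=
  Series (fun n => b (S n) * t ^ (S n)).

Definition is_inf (S : R -> Prop) (x : R) : Prop :=
  (forall t, S t -> x <= t) /\ (forall m, (forall t, S t -> m <= t) -> m <= x).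

(** With [f t := beta'(t) + ln (1 - t)] we have
    [f'(t) = (gamma(t) - 1) / (1 - t)], so the claim is that [f] has a
    nonpositive derivative at [tstar].  The function [f] is differentiable on
    [[0, 1)] because the radius of convergence of [beta] is at least 1, and
    [tstar] lies in [[0, 1)] because [beta'] is bounded by [sum k beta_k]
    there while [ln (1 - t) -> -oo].  If [f'(tstar)] were positive, [f] would
    be strictly increasing through [tstar]: either [f(tstar) >= 0], and then
    [f > 0] just to the right of [tstar], so [tstar] is not the infimum of
    [{f < 0}]; or [f(tstar) < 0], and then [f < 0] just to the left of
    [tstar] (which is positive since [f(0) = beta_1 >= 0]), so [tstar] is not
    a lower bound. *)

From Stdlib Require Import Reals Lra Lia.
From Coquelicot Require Import Coquelicot.
Open Scope R_scope.

Lemma is_derive_pos_local_increase (f : R -> R) (x l : R) :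
  is_derive f x l -> 0 < l ->
  exists d, 0 < d /\ forall y, Rabs (y - x) < d ->
    (x < y -> f x < f y) /\ (y < x -> f y < f x).
Proof.
  intros Hf Hl.
  apply is_derive_Reals in Hf.
  destruct (Hf l Hl) as [d Hd].
  exists d; split; [apply cond_pos |].
  intros y Hy.
  assert (Hq : y <> x -> 0 < (f y - f x) / (y - x)).
  { intros Hyx.
    specialize (Hd (y - x) ltac:(lra) Hy).
    replace (x + (y - x)) with y in Hd by ring.
    apply Rabs_def2 in Hd; lra. }
  split; intros Hyx.
  - assert (Hpos : 0 < (f y - f x) / (y - x) * (y - x))
      by (apply Rmult_lt_0_compat; [apply Hq |]; lra).
    replace ((f y - f x) / (y - x) * (y - x)) with (f y - f x) in Hpos
      by (field; lra).
    lra.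
  - assert (Hneg : (f y - f x) / (y - x) * (y - x) < 0)
      by (apply Rmult_pos_neg; [apply Hq |]; lra).
    replace ((f y - f x) / (y - x) * (y - x)) with (f y - f x) in Hneg
      by (field; lra).
    lra.
Qed.

Lemma is_inf_neg_set_derive_nonpos (f : R -> R) (a c x l : R) :
  is_inf (fun t => a <= t < c /\ f t < 0) x -> x <= c -> 0 <= f a ->
  is_derive f x l -> l <= 0.
Proof.
  intros [Hlb Hglb] Hxc Hfa Hf.
  assert (Hax : a <= x) by (apply Hglb; intros t [[Ht _] _]; exact Ht).
  apply Rnot_lt_le; intros Hl.
  destruct (is_derive_pos_local_increase f x l Hf Hl) as [d [Hd Hincr]].
  destruct (Rlt_or_le (f x) 0) as [Hfx | Hfx].
  - assert (Hxa : a < x) by (destruct (Req_dec x a) as [-> |]; lra).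
    set (y := x - Rmin (x - a) d / 2).
    assert (Hm : 0 < Rmin (x - a) d) by (apply Rmin_pos; lra).
    pose proof (Rmin_l (x - a) d); pose proof (Rmin_r (x - a) d).
    assert (Hy : Rabs (y - x) < d) by (unfold y; rewrite Rabs_left; lra).
    destruct (Hincr y Hy) as [_ Hfy].
    assert (x <= y) by (apply Hlb; unfold y in *; split; lra).
    unfold y in *; lra.
  - assert (x + d <= x); [| lra].
    apply Hglb; intros t [Ht Hft].
    apply Rnot_lt_le; intros Htd.
    pose proof (Hlb t (conj Ht Hft)).
    assert (Hxt : x < t) by (destruct (Req_dec t x) as [-> |]; lra).
    destruct (Hincr t ltac:(rewrite Rabs_pos_eq; lra)) as [Hfxt _].
    lra.
Qed.

Section BetaSeries.

Variable b : nat -> R.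
Hypothesis b_nonneg : forall k, (1 <= k)%nat -> 0 <= b k.
Hypothesis ex_series_kb : ex_series (fun n => INR (S n) * b (S n)).

Definition beta_coeffs : nat -> R := PS_incr_1 (fun n => b (S n)).

Lemma beta_fun_PSeries (t : R) : beta_fun b t = PSeries beta_coeffs t.
Proof.
  unfold beta_coeffs; rewrite PSeries_incr_1.
  unfold beta_fun, PSeries; rewrite <- Series_scal_l.
  apply Series_ext; intros n; simpl; ring.
Qed.

Lemma PS_derive_beta_coeffs (n : nat) :
  PS_derive beta_coeffs n = INR (S n) * b (S n).
Proof. reflexivity. Qed.

Lemma kb_nonneg (n : nat) : 0 <= INR (S n) * b (S n).
Proof. apply Rmult_le_pos; [apply pos_INR | apply b_nonneg; lia]. Qed.

Lemma CV_radius_beta_coeffs_lt (x : R) :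
  Rabs x < 1 -> Rbar_lt (Rabs x) (CV_radius beta_coeffs).
Proof.
  intros Hx.
  assert (H1 : Rbar_le 1 (CV_radius beta_coeffs)).
  { rewrite <- CV_radius_derive.
    apply (proj1 (Lub_Rbar_correct _)).
    eapply ex_series_ext; [| exact ex_series_kb]; intros n.
    rewrite PS_derive_beta_coeffs, pow1, Rmult_1_r, Rabs_pos_eq by apply kb_nonneg.
    reflexivity. }
  destruct (CV_radius beta_coeffs); simpl in *; lra.
Qed.

Lemma Derive_beta_fun (x : R) :
  Rabs x < 1 -> Derive (beta_fun b) x = PSeries (PS_derive beta_coeffs) x.
Proof.
  intros Hx; rewrite (Derive_ext _ _ _ beta_fun_PSeries).
  now apply Derive_PSeries, CV_radius_beta_coeffs_lt.
Qed.

Lemma ex_derive_Derive_beta_fun (x : R) :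
  Rabs x < 1 -> ex_derive (Derive (beta_fun b)) x.
Proof.
  intros Hx; eexists.
  apply (is_derive_ext (Derive (PSeries beta_coeffs))).
  - intros t; symmetry; apply Derive_ext, beta_fun_PSeries.
  - exact (is_derive_n_PSeries 2 _ _ (CV_radius_beta_coeffs_lt x Hx)).
Qed.

Lemma Derive_beta_fun_0 : Derive (beta_fun b) 0 = b 1%nat.
Proof.
  rewrite Derive_beta_fun by (rewrite Rabs_R0; lra).
  rewrite PSeries_0, PS_derive_beta_coeffs; simpl; ring.
Qed.

Lemma Derive_beta_fun_le (x : R) : 0 <= x < 1 ->
  Derive (beta_fun b) x <= Series (fun n => INR (S n) * b (S n)).
Proof.
  intros Hx; rewrite Derive_beta_fun by (rewrite Rabs_pos_eq; lra).
  apply Series_le; [| exact ex_series_kb]; intros n.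
  rewrite PS_derive_beta_coeffs.
  assert (0 <= x ^ n <= 1).
  { split; [apply pow_le; lra |].
    rewrite <- (pow1 n); apply pow_incr; lra. }
  pose proof (kb_nonneg n); split; nra.
Qed.

Lemma exists_Derive_beta_fun_ln_neg :
  exists t, 0 <= t < 1 /\ Derive (beta_fun b) t + ln (1 - t) < 0.
Proof.
  set (M := Series (fun n => INR (S n) * b (S n))).
  set (e := exp (- (Rabs M + 1))).
  assert (He : 0 < e < 1).
  { split; [apply exp_pos |].
    rewrite <- exp_0; apply exp_increasing.
    pose proof (Rabs_pos M); lra. }
  exists (1 - e); split; [lra |].
  replace (1 - (1 - e)) with e by ring.
  unfold e at 2; rewrite ln_exp.
  pose proof (Derive_beta_fun_le (1 - e) ltac:(lra)) as HM; fold M in HM.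
  pose proof (Rle_abs M); lra.
Qed.

End BetaSeries.

Theorem lemma7 (b : nat -> R)
  (hnn : forall k, (1 <= k)%nat -> 0 <= b k)
  (hsum : ex_series (fun n => INR (S n) * b (S n)))
  (tstar : R)
  (hinf : is_inf (fun t => 0 <= t < 1 /\
                   Derive (beta_fun b) t + ln (1 - t) < 0) tstar) :
  (1 - tstar) * Derive_n (beta_fun b) 2 tstar <= 1.
Proof.
  pose proof hinf as [Hlb Hglb].
  assert (Ht0 : 0 <= tstar) by (apply Hglb; intros t [[Ht _] _]; exact Ht).
  assert (Ht1 : tstar < 1).
  { destruct (exists_Derive_beta_fun_ln_neg b hnn hsum) as [t [Ht Hft]].
    pose proof (Hlb t (conj Ht Hft)); lra. }
  set (D2 := Derive_n (beta_fun b) 2 tstar).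
  assert (Hf : is_derive (fun t => Derive (beta_fun b) t + ln (1 - t)) tstar
                 (D2 - 1 / (1 - tstar))).
  { pose proof (Derive_correct _ _ (ex_derive_Derive_beta_fun b hnn hsum tstar
                  ltac:(rewrite Rabs_pos_eq; lra))) as HD.
    auto_derive; [split; [exists D2; exact HD | lra] |].
    change (Derive (fun x => Derive (beta_fun b) x) tstar) with D2; field; lra. }
  assert (Hf0 : 0 <= Derive (beta_fun b) 0 + ln (1 - 0)).
  { rewrite (Derive_beta_fun_0 b hnn hsum).
    rewrite Rminus_0_r, ln_1, Rplus_0_r; apply hnn; lia. }
  pose proof (is_inf_neg_set_derive_nonpos _ 0 1 _ _ hinf
                (Rlt_le _ _ Ht1) Hf0 Hf) as Hle.
  assert (0 < 1 - tstar) by lra.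
  apply (Rmult_le_reg_r (/ (1 - tstar))); [apply Rinv_0_lt_compat; lra |].
  replace ((1 - tstar) * D2 * / (1 - tstar)) with D2 by (field; lra).
  unfold Rdiv in Hle; lra.
Qed.
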